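(* Let $\mathcal{C}$ be a subsystem of a TRS $\mathcal{R}$. If $\ell\leftrightarrow^*_\mathcal{C}r$ for every rule $\ell\to r\in\mathcal{R}\setminus\mathcal{C}$, then $t\leftrightarrow^*_\mathcal{C}u$ for every parallel critical pair $(t,u)$ between $\mathcal{R}$ and $\mathcal{R}$.
   Context: A TRS is a set of rules $\ell\to r$ ($\ell\notin\mathcal{V}$, $\mathcal{V}ar(r)\subseteq\mathcal{V}ar(\ell)$); $\leftrightarrow^*_\mathcal{C}$ is the reflexive-transitive-symmetric closure of $\to_\mathcal{C}$. Parallel critical pair between $\mathcal{R}$ and $\mathcal{R}$: for variants (renamings) $\ell\to r$ and $\ell_p\to r_p$ ($p\in P$) of $\mathcal{R}$-rules, pairwise variable-disjoint, where $P$ is a non-empty set of pairwise parallel function-symbol positions of $\ell$, $\sigma$ a most general unifier of $\{\ell_p\approx\ell|_p\}_{p\in P}$, and $\ell_\epsilon\to r_\epsilon$ not a variant of $\ell\to r$ if $P=\{\epsilon\}$: the pair $((\ell\sigma)[r_p\sigma]_{p\in P}, r\sigma)$. *)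

From Stdlib Require Import List Relations Arith.
Import ListNotations.
Set Implicit Arguments.

Inductive term (F V : Type) : Type :=
| Var : V -> term F V
| Fun : F -> list (term F V) -> term F V.
Arguments Var {F V} _.
Arguments Fun {F V} _ _.

Fixpoint subst {F V : Type} (sigma : V -> term F V) (t : term F V) : term F V :=
  match t with
  | Var x => sigma x
  | Fun f ts => Fun f (map (subst sigma) ts)
  end.

Fixpoint vars {F V : Type} (t : term F V) : list V :=
  match t with
  | Var x => [x]
  | Fun _ ts => flat_map vars ts
  end.

(* Positions are sequences of (0-based) argument indices; [] is the root ε. *)
Definition pos := list nat.

Fixpoint subterm_at {F V : Type} (t : term F V) (p : pos) : option (term F V) :=
  match p with
  | [] => Some t
  | i :: p' =>
      match t with
      | Var _ => None
      | Fun _ ts =>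
          match nth_error ts i with
          | Some ti => subterm_at ti p'
          | None => None
          end
      end
  end.

(* t[s]_p  (returns t unchanged if p is not a position of t) *)
Fixpoint replace_at {F V : Type} (t : term F V) (p : pos) (s : term F V) : term F V :=
  match p with
  | [] => s
  | i :: p' =>
      match t with
      | Var _ => t
      | Fun f ts =>
          if i <? length ts
          then Fun f (firstn i ts ++ replace_at (nth i ts t) p' s :: skipn (S i) ts)
          else t
      end
  end.

Definition prefix (p q : pos) : Prop := exists r, q = p ++ r.
Definition parallel (p q : pos) : Prop := ~ prefix p q /\ ~ prefix q p.

Definition fun_pos {F V : Type} (t : term F V) (p : pos) : Prop :=
  exists f ts, subterm_at t p = Some (Fun f ts).

Definition rule (F V : Type) := (term F V * term F V)%type.
Definition trs (F V : Type) := rule F V -> Prop.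

Definition is_trs {F V : Type} (R : trs F V) : Prop :=
  forall l r, R (l, r) -> (forall x, l <> Var x) /\ incl (vars r) (vars l).

Definition subsystem {F V : Type} (C R : trs F V) : Prop :=
  forall rl, C rl -> R rl.

Inductive rstep {F V : Type} (C : trs F V) : term F V -> term F V -> Prop :=
| rstep_root : forall l r (sigma : V -> term F V),
    C (l, r) -> rstep C (subst sigma l) (subst sigma r)
| rstep_ctx : forall f ts1 ts2 s t,
    rstep C s t -> rstep C (Fun f (ts1 ++ s :: ts2)) (Fun f (ts1 ++ t :: ts2)).

Definition conv {F V : Type} (C : trs F V) : relation (term F V) :=
  clos_refl_sym_trans (term F V) (rstep C).

Definition variant {F V : Type} (rl' rl : rule F V) : Prop :=
  exists (rho rho' : V -> V),
    (forall x, rho' (rho x) = x) /\ (forall x, rho (rho' x) = x) /\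
    fst rl' = subst (fun x => Var (rho x)) (fst rl) /\
    snd rl' = subst (fun x => Var (rho x)) (snd rl).

Definition variant_of {F V : Type} (R : trs F V) (rl' : rule F V) : Prop :=
  exists rl, R rl /\ variant rl' rl.

Definition rule_vars {F V : Type} (rl : rule F V) : list V :=
  vars (fst rl) ++ vars (snd rl).

Definition var_disjoint {F V : Type} (rl1 rl2 : rule F V) : Prop :=
  forall x, In x (rule_vars rl1) -> ~ In x (rule_vars rl2).

Definition is_mgu {F V : Type} (U : (V -> term F V) -> Prop) (sigma : V -> term F V) : Prop :=
  U sigma /\ forall tau, U tau -> exists delta, forall x, tau x = subst delta (sigma x).

(* Parallel critical pair between R and R.
   The family {ℓ_p → r_p}_{p∈P} is given as a list Ps of pairs (p, (ℓ_p, r_p))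
   with pairwise distinct positions p. *)
Definition parallel_critical_pair {F V : Type} (R : trs F V) (t u : term F V) : Prop :=
  exists (l r : term F V) (Ps : list (pos * rule F V)) (sigma : V -> term F V),
    variant_of R (l, r) /\
    Ps <> [] /\
    NoDup (map fst Ps) /\
    (forall p rl, In (p, rl) Ps -> variant_of R rl /\ fun_pos l p) /\
    (forall p q, In p (map fst Ps) -> In q (map fst Ps) -> p <> q -> parallel p q) /\
    (forall p rl, In (p, rl) Ps -> var_disjoint rl (l, r)) /\
    (forall p rl q rl', In (p, rl) Ps -> In (q, rl') Ps -> p <> q -> var_disjoint rl rl') /\
    is_mgu (fun tau => forall p lp rp s, In (p, (lp, rp)) Ps ->
                         subterm_at l p = Some s -> subst tau lp = subst tau s) sigma /\
    (map fst Ps = [[]] -> forall rl, In ([], rl) Ps -> ~ variant rl (l, r)) /\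
    t = fold_left (fun acc (e : pos * rule F V) =>
                     replace_at acc (fst e) (subst sigma (snd (snd e)))) Ps (subst sigma l) /\
    u = subst sigma r.

From Stdlib Require Import List Relations Arith Lia Classical.
Import ListNotations.

(* Under the hypothesis, every rule l -> r of R satisfies
   l <->*_C r: rules of C by a single step, the others by assumption; the
   same then holds for variants, since conversion is closed under
   substitution.  A parallel critical pair (t, u) arises from l sigma by
   replacing, at pairwise parallel positions p, the subterm
   (l sigma)|_p = l|_p sigma = l_p sigma by r_p sigma, and u = r sigma.
   Each such replacement is a conversion l_p sigma <->*_C r_p sigma inside a
   context, so t <->*_C l sigma <->*_C r sigma = u. *)

Section Terms.
Context {F V : Type}.

Fixpoint term_ind_nested (P : term F V -> Prop)
  (HV : forall x, P (Var x))
  (HF : forall f ts, Forall P ts -> P (Fun f ts)) (t : term F V) : P t :=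
  match t with
  | Var x => HV x
  | Fun f ts => HF f ts ((fix go (l : list (term F V)) : Forall P l :=
       match l with
       | [] => Forall_nil _
       | a :: l' => Forall_cons _ (term_ind_nested P HV HF a) (go l')
       end) ts)
  end.

Lemma subst_subst (sigma tau : V -> term F V) (t : term F V) :
  subst tau (subst sigma t) = subst (fun x => subst tau (sigma x)) t.
Proof.
  induction t as [x | f ts IH] using term_ind_nested; simpl; auto.
  f_equal. rewrite map_map. apply map_ext_in.
  intros a Ha. rewrite Forall_forall in IH. auto.
Qed.

Lemma subst_Var (t : term F V) : subst Var t = t.
Proof.
  induction t as [x | f ts IH] using term_ind_nested; simpl; auto.
  f_equal. rewrite <- (map_id ts) at 2. apply map_ext_in.
  intros a Ha. rewrite Forall_forall in IH. auto.
Qed.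

Lemma subterm_at_subst (sigma : V -> term F V) (p : pos) :
  forall t s, subterm_at t p = Some s ->
  subterm_at (subst sigma t) p = Some (subst sigma s).
Proof.
  induction p as [|i p IH]; intros t s Hs; simpl in *.
  - congruence.
  - destruct t as [x | f ts]; [discriminate|]. simpl.
    rewrite nth_error_map. destruct (nth_error ts i); [|discriminate].
    simpl. auto.
Qed.

Lemma nth_error_splice (ts : list (term F V)) (i j : nat) (x : term F V) :
  i < length ts ->
  nth_error (firstn i ts ++ x :: skipn (S i) ts) j =
  if j =? i then Some x else nth_error ts j.
Proof.
  revert i j. induction ts as [|y ts IH]; intros [|i] [|j] Hi;
    simpl in *; auto; try lia.
  apply IH. lia.
Qed.

Lemma replace_at_Fun (f : F) (ts : list (term F V)) (i : nat) (ti : term F V)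
  (p : pos) (s : term F V) :
  nth_error ts i = Some ti ->
  replace_at (Fun f ts) (i :: p) s =
  Fun f (firstn i ts ++ replace_at ti p s :: skipn (S i) ts).
Proof.
  intros Hi. simpl.
  assert (Hlt : i < length ts) by (apply nth_error_Some; congruence).
  rewrite (proj2 (Nat.ltb_lt _ _) Hlt).
  rewrite (nth_error_nth' ts (Fun f ts) Hlt) in Hi. congruence.
Qed.

Lemma parallel_cons (i : nat) (p q : pos) :
  parallel (i :: p) (i :: q) -> parallel p q.
Proof.
  intros [Hpq Hqp]. split.
  - intros [r Hr]. apply Hpq. exists r. simpl. congruence.
  - intros [r Hr]. apply Hqp. exists r. simpl. congruence.
Qed.

Lemma subterm_at_replace_parallel (p : pos) :
  forall q (t b s : term F V), parallel p q ->
  subterm_at t q = Some s -> subterm_at (replace_at t p b) q = Some s.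
Proof.
  induction p as [|i p IH]; intros q t b s Hpar Hs.
  - exfalso. apply (proj1 Hpar). exists q. reflexivity.
  - destruct q as [|j q].
    { exfalso. apply (proj2 Hpar). exists (i :: p). reflexivity. }
    destruct t as [x | f ts]; [discriminate|].
    destruct (nth_error ts i) as [ti|] eqn:Hti.
    2:{ simpl. rewrite (proj2 (Nat.ltb_ge _ _) (proj1 (nth_error_None _ _) Hti)).
        exact Hs. }
    rewrite (replace_at_Fun f ts i ti p b Hti). simpl in *.
    rewrite nth_error_splice by (apply nth_error_Some; congruence).
    destruct (Nat.eqb_spec j i) as [->|Hne]; [|exact Hs].
    rewrite Hti in Hs. apply IH; [apply (parallel_cons i p q Hpar) | exact Hs].
Qed.

End Terms.

Definition replace_all {F V : Type} (L : list (pos * term F V)) (t : term F V) :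
  term F V :=
  fold_left (fun acc e => replace_at acc (fst e) (snd e)) L t.

Section Conversion.
Context {F V : Type}.
Variable C : trs F V.

Lemma conv_ctx (f : F) (ts1 ts2 : list (term F V)) (a b : term F V) :
  conv C a b -> conv C (Fun f (ts1 ++ a :: ts2)) (Fun f (ts1 ++ b :: ts2)).
Proof.
  induction 1.
  - apply rst_step. constructor. assumption.
  - apply rst_refl.
  - apply rst_sym. assumption.
  - eapply rst_trans; eassumption.
Qed.

Lemma rstep_subst (tau : V -> term F V) (a b : term F V) :
  rstep C a b -> rstep C (subst tau a) (subst tau b).
Proof.
  induction 1 as [l r sigma Hlr | f ts1 ts2 s t _ IH].
  - rewrite !subst_subst. constructor. assumption.
  - simpl. rewrite !map_app. simpl. constructor. assumption.
Qed.

Lemma conv_subst (tau : V -> term F V) (a b : term F V) :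
  conv C a b -> conv C (subst tau a) (subst tau b).
Proof.
  induction 1.
  - apply rst_step. apply rstep_subst. assumption.
  - apply rst_refl.
  - apply rst_sym. assumption.
  - eapply rst_trans; eassumption.
Qed.

Lemma conv_replace_at (p : pos) :
  forall s a b, subterm_at s p = Some a -> conv C a b ->
  conv C s (replace_at s p b).
Proof.
  induction p as [|i p IH]; intros s a b Ha Hab; simpl in Ha.
  - injection Ha as <-. exact Hab.
  - destruct s as [x | f ts]; [discriminate|].
    destruct (nth_error ts i) as [ti|] eqn:Hti; [|discriminate].
    rewrite (replace_at_Fun f ts i ti p b Hti).
    rewrite <- (firstn_skipn_middle i ts Hti) at 1.
    apply conv_ctx. eapply IH; eassumption.
Qed.

Lemma conv_replace_all (L : list (pos * term F V)) :
  forall t, NoDup (map fst L) ->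
  (forall p q, In p (map fst L) -> In q (map fst L) -> p <> q -> parallel p q) ->
  (forall p s, In (p, s) L -> exists a, subterm_at t p = Some a /\ conv C a s) ->
  conv C t (replace_all L t).
Proof.
  induction L as [|[p0 s0] L IH]; intros t Hnd Hpar Hsub; simpl.
  - apply rst_refl.
  - inversion Hnd as [|? ? Hp0 Hnd']; subst.
    destruct (Hsub p0 s0 (or_introl eq_refl)) as [a [Ha Has]].
    eapply rst_trans; [eapply conv_replace_at; eassumption|].
    apply IH; auto.
    + intros p q Hp Hq. apply Hpar; simpl; auto.
    + intros p s Hin. destruct (Hsub p s (or_intror Hin)) as [a' [Ha' Has']].
      exists a'. split; [|exact Has'].
      apply subterm_at_replace_parallel; [|exact Ha'].
      apply (in_map fst) in Hin. simpl in Hin.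
      apply Hpar; simpl; auto.
      intros ->. contradiction.
Qed.

Variable R : trs F V.
Hypothesis R_minus_C_conv : forall l r, R (l, r) -> ~ C (l, r) -> conv C l r.

Lemma rule_conv (l r : term F V) : R (l, r) -> conv C l r.
Proof.
  intros Hlr. destruct (classic (C (l, r))) as [HC|HnC].
  2:{ exact (R_minus_C_conv l r Hlr HnC). }
  apply rst_step. rewrite <- (subst_Var l), <- (subst_Var r).
  constructor. exact HC.
Qed.

Lemma variant_conv (l r : term F V) : variant_of R (l, r) -> conv C l r.
Proof.
  intros [[l0 r0] [Hin [rho [_ [_ [_ [El Er]]]]]]]. simpl in El, Er. subst.
  apply conv_subst, rule_conv. exact Hin.
Qed.

End Conversion.

Lemma fold_left_map {A B C : Type} (f : A -> B -> A) (g : C -> B) :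
  forall (l : list C) (a : A),
  fold_left f (map g l) a = fold_left (fun acc x => f acc (g x)) l a.
Proof. induction l; simpl; auto. Qed.

Theorem mainTheorem14 (F V : Type) (R C : trs F V) :
  is_trs R -> subsystem C R ->
  (forall l r, R (l, r) -> ~ C (l, r) -> conv C l r) ->
  forall t u, parallel_critical_pair R t u -> conv C t u.
Proof.
  intros _ _ HRC t u
    [l [r [Ps [sigma [Hlr [_ [Hnd [HPs [Hpar [_ [_ [[Hunif _] [_ [-> ->]]]]]]]]]]]]]].
  set (L := map (fun e : pos * rule F V => (fst e, subst sigma (snd (snd e)))) Ps).
  assert (HL : map fst L = map fst Ps) by (unfold L; rewrite map_map; reflexivity).
  (* Replacing each (l sigma)|_p = l_p sigma by r_p sigma is a conversion. *)
  assert (Ht : conv C (subst sigma l) (replace_all L (subst sigma l))).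
  { apply conv_replace_all; rewrite ?HL; auto.
    intros p s Hin. unfold L in Hin. apply in_map_iff in Hin.
    destruct Hin as [[p' [lp rp]] [Heq Hin]]. injection Heq as <- <-.
    destruct (HPs _ _ Hin) as [Hvp [f [ts Hf]]].
    exists (subst sigma (Fun f ts)). split; [apply subterm_at_subst, Hf|].
    rewrite <- (Hunif _ _ _ _ Hin Hf). apply conv_subst, (variant_conv C R HRC _ _ Hvp). }
  (* The result of these replacements is t; so t <->* l sigma <->* r sigma = u. *)
  unfold replace_all, L in Ht. rewrite fold_left_map in Ht.
  eapply rst_trans; [apply rst_sym, Ht|].
  apply conv_subst, (variant_conv C R HRC _ _ Hlr).
Qed.
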